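(* In the setting below, $\|\mathcal{T}_A\varphi\|_{A_0}\le9\|\varphi\|_{A_0}$ for all $\varphi\in X_N$.
   Context: Standing: $d\ge2$, $m\ge1$, $L\ge3$ odd, $N\ge1$. $\mathbb{T}_N=(\mathbb{Z}/L^N\mathbb{Z})^d$; $X_N$: maps $\mathbb{T}_N\to\mathbb{C}^m$ with zero sum; $\langle\varphi,\psi\rangle=\sum_x\langle\varphi(x),\overline{\psi(x)}\rangle$. $(\nabla_j\varphi)(x)=\varphi(x+e_j)-\varphi(x)$. $A:\mathbb{C}^{m\times d}\to\mathbb{C}^{m\times d}$ linear with $A=A_0+A_1$, $A_0$ Hermitian with $\langle A_0F,F\rangle\ge c_0|F|^2$ ($c_0>0$), $\|A_1\|\le c_0/2$. $(\varphi,\psi)_A=\langle A\nabla\varphi,\nabla\psi\rangle$, $\|\varphi\|_{A_0}=(\varphi,\varphi)_{A_0}^{1/2}$. Let $l\ge3$ be an integer with $l-1<L^N$, $Q=\{1,\dots,l-1\}^d$, $H(Q+x)=\{\varphi\in X_N:\varphi=0\text{ outside }Q+x\}$; $\Pi_{A,x}\varphi$ is the unique $v\in H(Q+x)$ with $(v,\psi)_A=(\varphi,\psi)_A$ for all $\psi\in H(Q+x)$. $\mathcal{T}_A=l^{-d}\sum_{x\in\mathbb{T}_N}\Pi_{A,x}$. *)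

From HB Require Import structures.
From mathcomp Require Import all_boot all_order all_algebra.
From mathcomp.real_closed Require Import complex.
From Stdlib Require Import ClassicalEpsilon.
Set Implicit Arguments. Unset Strict Implicit. Unset Printing Implicit Defensive.
Import Order.TTheory GRing.Theory Num.Theory.
Local Open Scope ring_scope.
Local Open Scope complex_scope.

Section Defs.
Variables (R : rcfType) (d m n : nat).
(* n plays the role of L^N; the torus (Z/nZ)^d is 'rV['Z_n]_d *)
Local Notation C := R[i].
Local Notation torus := 'rV['Z_n]_d.
Local Notation mat := 'M[C]_(m, d).

Definition field := {ffun torus -> 'cV[C]_m}.

Definition fdot (F G : mat) : C := \sum_i \sum_j F i j * (G i j)^*.

Definition fnorm (F : mat) : R := Num.sqrt (complex.Re (fdot F F)).

Definition evec (j : 'I_d) : torus := delta_mx 0 j.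

Definition grad (phi : field) (x : torus) : mat :=
  \matrix_(i < m, j < d) (phi (x + evec j) i 0 - phi x i 0).

Definition inX (phi : field) : Prop := \sum_x phi x = 0.

Definition formA (A : mat -> mat) (phi psi : field) : C :=
  \sum_x fdot (A (grad phi x)) (grad psi x).

Definition normA (A0 : mat -> mat) (phi : field) : R :=
  Num.sqrt (complex.Re (formA A0 phi phi)).

Definition inQx (l : nat) (x y : torus) : bool :=
  [forall j, (1 <= val ((y - x)%R ord0 j) <= l.-1)%N].

Definition inH (l : nat) (x : torus) (phi : field) : Prop :=
  inX phi /\ forall y, ~~ inQx l x y -> phi y = 0.

Definition isPi (A : mat -> mat) (l : nat) (x : torus) (phi v : field) : Prop :=
  inH l x v /\ forall psi, inH l x psi -> formA A v psi = formA A phi psi.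

(* Pi_{A,x} phi : the (unique, under the standing hypotheses) v with isPi *)
Definition Pi (A : mat -> mat) (l : nat) (x : torus) (phi : field) : field :=
  epsilon (inhabits 0) (isPi A l x phi).

Definition TA (A : mat -> mat) (l : nat) (phi : field) : field :=
  ((l%:R : C) ^- d) *: \sum_x Pi A l x phi.

End Defs.

(* Let q0 be the quadratic form of A0 on 'M_(m, d), so that ||v||_{A0}^2 is the
   sum over the torus of q0 of the gradient of v.  Since |A1| <= c0 / 2, the form
   of A = A0 + A1 is coercive with respect to q0, which gives existence of
   Pi_{A,x} by finite-dimensional Lax-Milgram.  Testing the defining identity of
   v = Pi_{A,x} phi against v itself and splitting A = A0 + A1 pointwise yields
   ||v||_{A0}^2 <= 9 times the q0-energy of phi on the box x + {0, ..., l - 1}^d,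
   outside of which the gradient of v vanishes.  Averaging over x with
   Cauchy-Schwarz, and noting that every point lies in at most l^d boxes, gives
   ||T_A phi||_{A0}^2 <= 9 ||phi||_{A0}^2, i.e. the bound even holds with
   constant 3. *)

From HB Require Import structures.
From mathcomp Require Import all_boot all_order all_algebra.
From mathcomp.real_closed Require Import complex.
From Stdlib Require Import ClassicalEpsilon.
From mathcomp Require Import ring lra zify.
Import Order.TTheory GRing.Theory Num.Theory.
Set Implicit Arguments. Unset Strict Implicit. Unset Printing Implicit Defensive.
Local Open Scope ring_scope.
Local Notation "x %:C" := (real_complex _ x) (format "x %:C") : ring_scope.
Local Notation Re := complex.Re.

Section RealPart.
Variable R : rcfType.
Implicit Types z w : R[i].

Lemma ReD z w : Re (z + w) = Re z + Re w.
Proof. by case: z; case: w. Qed.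

Lemma ReN z : Re (- z) = - Re z.
Proof. by case: z. Qed.

Lemma Re_conj z : Re (z^*) = Re z.
Proof. by case: z. Qed.

Lemma Re_realM (r : R) z : Re (r%:C * z) = r * Re z.
Proof. by case: z => a b /=; rewrite mul0r subr0. Qed.

Lemma Re_sum (I : Type) (r : seq I) (P : pred I) (F : I -> R[i]) :
  Re (\sum_(i <- r | P i) F i) = \sum_(i <- r | P i) Re (F i).
Proof. by elim/big_rec2: _ => // i y1 y2 _ <-; rewrite ReD. Qed.

Lemma conj_realC (r : R) : (r%:C)^* = r%:C.
Proof. by rewrite conj_Creal // complex_real. Qed.

Lemma Re_ge0 z : 0 <= z -> 0 <= Re z.
Proof. by rewrite lecE => /andP[]. Qed.

End RealPart.

Section Frobenius.
Variables (R : rcfType) (m d : nat).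
Local Notation mat := 'M[R[i]]_(m, d).
Implicit Types X Y Z : mat.

Lemma fdotDl X Y Z : fdot (X + Y) Z = fdot X Z + fdot Y Z.
Proof.
rewrite /fdot -big_split; apply: eq_bigr => i _.
by rewrite -big_split; apply: eq_bigr => j _; rewrite !mxE mulrDl.
Qed.

Lemma fdotDr X Y Z : fdot X (Y + Z) = fdot X Y + fdot X Z.
Proof.
rewrite /fdot -big_split; apply: eq_bigr => i _.
by rewrite -big_split; apply: eq_bigr => j _; rewrite !mxE rmorphD mulrDr.
Qed.

Lemma fdotZl a X Y : fdot (a *: X) Y = a * fdot X Y.
Proof.
rewrite /fdot mulr_sumr; apply: eq_bigr => i _.
by rewrite mulr_sumr; apply: eq_bigr => j _; rewrite !mxE mulrA.
Qed.

Lemma fdotZr a X Y : fdot X (a *: Y) = a^* * fdot X Y.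
Proof.
rewrite /fdot mulr_sumr; apply: eq_bigr => i _.
by rewrite mulr_sumr; apply: eq_bigr => j _; rewrite !mxE rmorphM mulrCA.
Qed.

Lemma fdotC X Y : fdot Y X = (fdot X Y)^*.
Proof.
rewrite /fdot rmorph_sum; apply: eq_bigr => i _.
rewrite (rmorph_sum (@Num.Def.conjC _)); apply: eq_bigr => j _.
by rewrite (rmorphM (@Num.Def.conjC _)) mulrC; congr (_ * _); exact/esym/conjCK.
Qed.

Lemma fdot0r X : fdot X 0 = 0.
Proof. by rewrite -(scale0r 0) fdotZr conjC0 mul0r. Qed.

Lemma fdotNl X Y : fdot (- X) Y = - fdot X Y.
Proof. by rewrite -scaleN1r fdotZl mulN1r. Qed.

Lemma fdotNr X Y : fdot X (- Y) = - fdot X Y.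
Proof. by rewrite -scaleN1r fdotZr conjCN1 mulN1r. Qed.

Lemma fdot_suml (I : Type) (r : seq I) (P : pred I) (F : I -> mat) Y :
  fdot (\sum_(i <- r | P i) F i) Y = \sum_(i <- r | P i) fdot (F i) Y.
Proof.
elim/big_rec2: _ => [|i y1 y2 _ <-]; last exact: fdotDl.
by rewrite -(scale0r 0) fdotZl mul0r.
Qed.

Lemma fdot_sumr (I : Type) (r : seq I) (P : pred I) (F : I -> mat) Y :
  fdot Y (\sum_(i <- r | P i) F i) = \sum_(i <- r | P i) fdot Y (F i).
Proof. by elim/big_rec2: _ => [|i y1 y2 _ <-]; [exact: fdot0r | exact: fdotDr]. Qed.

Lemma fdot_ge0 X : 0 <= fdot X X.
Proof. by apply: sumr_ge0 => i _; apply: sumr_ge0 => j _; exact: mul_conjC_ge0. Qed.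

Lemma fnormN X : fnorm (- X) = fnorm X.
Proof. by rewrite /fnorm fdotNl fdotNr opprK. Qed.

Lemma fnorm_ge0 X : 0 <= fnorm X.
Proof. exact: sqrtr_ge0. Qed.

Lemma fnorm_sqr X : fnorm X ^+ 2 = Re (fdot X X).
Proof. by rewrite /fnorm sqr_sqrtr // Re_ge0 // fdot_ge0. Qed.

Lemma fdot_eq0 X : (fdot X X == 0) = (X == 0).
Proof.
apply/idP/eqP => [|->]; last by rewrite fdot0r.
have ge0 i j : 0 <= X i j * (X i j)^* by exact: mul_conjC_ge0.
rewrite psumr_eq0 => [/allP X0|i _]; last exact: sumr_ge0.
apply/matrixP => i j; rewrite mxE; apply/eqP.
move: (X0 i (mem_index_enum _)); rewrite psumr_eq0 // => /allP/(_ j (mem_index_enum _)).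
by rewrite -normCK sqrf_eq0 normr_eq0.
Qed.

Lemma Re_fdot_eq0 X : Re (fdot X X) = 0 -> X = 0.
Proof.
move=> Re0; apply/eqP; rewrite -fdot_eq0.
by move: (fdot_ge0 X) Re0; rewrite lecE /=; case: (fdot X X) => a b /= /andP[/eqP -> _] ->.
Qed.

End Frobenius.

Section HermitianForm.
Variables (R : rcfType) (m d : nat).
Local Notation mat := 'M[R[i]]_(m, d).
Variable M : {linear mat -> mat}.
Hypothesis M_herm : forall F G, fdot (M F) G = fdot F (M G).
Hypothesis M_ge0 : forall F, 0 <= Re (fdot (M F) F).
Local Notation q F := (Re (fdot (M F) F)).

(* Expand [0 <= q (G - s F)]. *)
Lemma Re_form_le (s : R) F G : 2 * s * Re (fdot (M F) G) <= s ^+ 2 * q F + q G.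
Proof.
have := M_ge0 ((- s)%:C *: F + G).
rewrite linearP fdotDl !fdotDr !fdotZl !fdotZr conj_realC.
rewrite (M_herm G F) (fdotC (M F) G) !mulrA -!rmorphM !ReD !Re_realM Re_conj.
lra.
Qed.

Lemma form_sum_le (I : finType) (P : pred I) (G : I -> mat) :
  q (\sum_(i | P i) G i) <= #|P|%:R * \sum_(i | P i) q (G i).
Proof.
have AMGM i j : 2 * Re (fdot (M (G i)) (G j)) <= q (G i) + q (G j).
  by have := Re_form_le 1 (G i) (G j); rewrite mulr1 expr1n mul1r.
rewrite [M _]linear_sum fdot_suml Re_sum -(ler_pM2l (ltr0Sn _ 1)).
apply: (@le_trans _ _ (\sum_(i | P i) \sum_(j | P j) (q (G i) + q (G j)))).
  rewrite mulr_sumr; apply: ler_sum => i _.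
  by rewrite fdot_sumr Re_sum mulr_sumr; apply: ler_sum => j _.
under eq_bigr do rewrite big_split /= sumr_const.
rewrite big_split /= exchange_big /=.
under [X in _ + X]eq_bigr do rewrite sumr_const.
by rewrite sumrMnl -mulr_natl; lra.
Qed.

End HermitianForm.

Section Gradient.
Variables (R : rcfType) (d m n : nat).
Local Notation torus := 'rV['Z_n]_d.
Local Notation fld := (field R d m n).
Implicit Types (phi psi v : fld) (x y : torus).

Lemma gradP (a : R[i]) phi psi x : grad (a *: phi + psi) x = a *: grad phi x + grad psi x.
Proof. by apply/matrixP => i j; rewrite !mxE !ffunE !mxE; ring. Qed.

Lemma gradZ (a : R[i]) phi x : grad (a *: phi) x = a *: grad phi x.
Proof. by apply/matrixP => i j; rewrite !mxE !ffunE !mxE; ring. Qed.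

Lemma grad_sum (I : Type) (r : seq I) (P : pred I) (F : I -> fld) x :
  grad (\sum_(i <- r | P i) F i) x = \sum_(i <- r | P i) grad (F i) x.
Proof.
have gradD phi psi : grad (phi + psi) x = grad phi x + grad psi x.
  by move: (gradP 1 phi psi x); rewrite !scale1r.
have grad0 : grad (0 : fld) x = 0 by move: (gradZ 0 (0 : fld) x); rewrite !scale0r.
exact: (big_morph (fun phi : fld => grad phi x) gradD grad0).
Qed.

Lemma evecE (j k : 'I_d) : evec n j ord0 k = (j == k)%:R.
Proof. by rewrite /evec mxE (eq_sym k) ord1. Qed.

Lemma grad0_const v : (forall y, grad v y = 0) -> forall y, v y = v 0.
Proof.
move=> grad0.
have step y j : v (y + evec n j) = v y.
  apply/matrixP => i k; rewrite (ord1 k).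
  by have /matrixP/(_ i j)/eqP := grad0 y; rewrite !mxE subr_eq0 => /eqP.
have steps (f : 'I_d -> nat) y : v (y + \sum_j evec n j *+ f j) = v y.
  elim/big_rec: _ y => [|j S _ IH] y; first by rewrite addr0.
  rewrite addrA IH; elim: (f j) => [|k IHk]; first by rewrite mulr0n addr0.
  by rewrite mulrSr addrA step.
move=> y; have {1}-> : y = 0 + \sum_j evec n j *+ val (y ord0 j).
  apply/matrixP => i j; rewrite (ord1 i) add0r summxE (bigD1 j) //= big1 => [|k kj].
    by rewrite addr0 mulmxnE evecE eqxx natr_Zp.
  by rewrite mulmxnE evecE (negbTE kj) mul0rn.
exact: steps.
Qed.

Lemma grad0_inX_eq0 v : inX v -> (forall y, grad v y = 0) -> v = 0.
Proof.
move=> sum0 /grad0_const vconst.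
have v00 : v 0 = 0.
  move: sum0; rewrite /inX; under eq_bigr do rewrite vconst.
  rewrite sumr_const -scaler_nat => /eqP; rewrite scaler_eq0 pnatr_eq0 => /orP[|/eqP //].
  by move=> /eqP/card0_eq/(_ 0).
by apply/ffunP => y; rewrite vconst v00 ffunE.
Qed.

Variable l : nat.

Definition box x y : bool := [forall j, (val ((y - x)%R ord0 j) <= l.-1)%N].

(* A coordinate of [y - x] that is at least [l] stays so after a unit step,
   unless it wraps around to [0]; either way it is outside [1 .. l - 1]. *)
Lemma notbox_notinQx x y :
  ~~ box x y -> ~~ inQx l x y /\ forall j, ~~ inQx l x (y + evec n j).
Proof.
move=> /forallPn [k]; rewrite -ltnNge => lt_l; split.
  by apply/forallP => /(_ k) /andP [_]; rewrite leqNgt lt_l.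
move=> j; apply/forallP => /(_ k).
have -> : (y + evec n j - x) ord0 k = (y - x) ord0 k + (j == k)%:R.
  by rewrite addrAC !mxE (eq_sym k) ord1.
case: eqP => _; last by rewrite addr0 => /andP[_]; rewrite leqNgt lt_l.
rewrite /= [(1 %% _)%N]modn_small //; set a := val ((y - x) ord0 k).
have := ltn_ord ((y - x) ord0 k); rewrite -/a => a_lt.
by case: (ltngtP (a + 1) (Zp_trunc n).+2) => [a1|a1|->]; rewrite ?modnn ?modn_small //; lia.
Qed.

Lemma grad_inH_notbox x psi y : inH l x psi -> ~~ box x y -> grad psi y = 0.
Proof.
move=> [_ psi0] /notbox_notinQx [Qy Qyj]; apply/matrixP => i j.
by rewrite !mxE (psi0 _ Qy) (psi0 _ (Qyj j)) !mxE subrr.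
Qed.

Lemma card_box y : (0 < l)%N -> (#|[pred x | box x y]| <= l ^ d)%N.
Proof.
move=> l_gt0.
pose f x := [ffun j => inord (val ((y - x) ord0 j)) : 'I_(l.-1).+1].
have f_inj : {in [pred x | box x y] &, injective f}.
  move=> x1 x2; rewrite !inE => /forallP b1 /forallP b2 /ffunP f12.
  have /addrI/oppr_inj// : y - x1 = y - x2.
  apply/matrixP => i j; rewrite (ord1 i); apply: val_inj.
  by have := congr1 val (f12 j); rewrite !ffunE /= !inordK ?ltnS ?b1 ?b2.
rewrite -(card_in_imset f_inj); apply: leq_trans (max_card _) _.
by rewrite card_ffun !card_ord prednK.
Qed.

Lemma inH_vspace x : exists U : {vspace fld}, forall psi, psi \in U <-> inH l x psi.
Proof.
pose cut phi : fld := [ffun y => if inQx l x y then 0 else phi y].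
have cut_lin : linear cut.
  by move=> a u v; apply/ffunP => y; rewrite !ffunE; case: ifP; rewrite ?scaler0 ?addr0.
pose total phi := \sum_y phi y.
have total_lin : linear total.
  move=> a u v; rewrite /total scaler_sumr -big_split /=.
  by apply: eq_bigr => y _; rewrite !ffunE.
pose fcut := linfun (HB.pack cut (GRing.isLinear.Build _ _ _ _ cut cut_lin) : {linear fld -> fld}).
pose ftotal := linfun (HB.pack total
  (GRing.isLinear.Build _ _ _ _ total total_lin) : {linear fld -> 'cV[R[i]]_m}).
exists (lker fcut :&: lker ftotal)%VS => psi.
rewrite memv_cap !memv_ker !lfunE /=; split.
  move=> /andP [/eqP cut0 /eqP total0]; split => // y Qy.
  by have /ffunP/(_ y) := cut0; rewrite !ffunE (negbTE Qy).
move=> [total0 out0]; apply/andP; split; apply/eqP => //.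
by apply/ffunP => y; rewrite !ffunE; case: ifP => // /negbT/out0.
Qed.

End Gradient.

Lemma linear_onto_of_inj (K : fieldType) (V : vectType K) (k : nat) (U : {vspace V})
    (g : V -> 'rV[K]_k) :
  linear g -> k = \dim U -> (forall u, u \in U -> g u = 0 -> u = 0) ->
  forall w, exists2 u, u \in U & g u = w.
Proof.
move=> g_lin dimU g_inj w.
pose f := linfun (HB.pack g (GRing.isLinear.Build _ _ _ _ g g_lin) : {linear V -> 'rV[K]_k}).
have fE u : f u = g u by rewrite lfunE.
have capU0 : (U :&: lker f)%VS = 0%VS.
  apply/eqP; rewrite -subv0; apply/subvP => u /memv_capP [Uu]; rewrite memv_ker fE => /eqP gu0.
  by rewrite (g_inj u Uu gu0) mem0v.
have /eqP fU : (f @: U == fullv)%VS.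
  by rewrite -(dimv_leqif_eq (subvf _)).2 (limg_dim_eq capU0) dimvf /dim /= mul1n dimU.
have : w \in (f @: U)%VS by rewrite fU memvf.
by case/memv_imgP => u Uu ->; exists u; rewrite ?fE.
Qed.

Section SesquilinearForm.
Variables (R : rcfType) (d m n : nat).
Local Notation mat := 'M[R[i]]_(m, d).
Local Notation fld := (field R d m n).
Implicit Types (psi u v : fld).
Variable A : mat -> mat.

Lemma formAP : linear A ->
  forall a u v psi, formA A (a *: u + v) psi = a * formA A u psi + formA A v psi.
Proof.
move=> A_lin a u v psi; rewrite /formA mulr_sumr -big_split /=; apply: eq_bigr => y _.
by rewrite gradP A_lin fdotDl fdotZl.
Qed.

Lemma formA_sumr (k : nat) (c : 'I_k -> R[i]) (b : 'I_k -> fld) u :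
  formA A u (\sum_i c i *: b i) = \sum_i (c i)^* * formA A u (b i).
Proof.
rewrite /formA; under eq_bigr do rewrite grad_sum fdot_sumr.
rewrite exchange_big /=; apply: eq_bigr => i _.
by rewrite mulr_sumr; apply: eq_bigr => y _; rewrite gradZ fdotZr.
Qed.

End SesquilinearForm.

Section Operator.
Variables (R : rcfType) (d m n l : nat).
Local Notation mat := 'M[R[i]]_(m, d).
Local Notation torus := 'rV['Z_n]_d.
Local Notation fld := (field R d m n).
Variables (A0 A1 : {linear mat -> mat}) (c0 : R).
Hypothesis c0_gt0 : 0 < c0.
Hypothesis A0_herm : forall F G : mat, fdot (A0 F) G = fdot F (A0 G).
Hypothesis A0_coercive : forall F : mat, c0 * fnorm F ^+ 2 <= Re (fdot (A0 F) F).
Hypothesis A1_small : forall F : mat, fnorm (A1 F) <= c0 / 2 * fnorm F.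
Local Notation A := (fun F : mat => A0 F + A1 F).
Local Notation q0 F := (Re (fdot (A0 F) F)).
Implicit Types (F G X : mat) (phi psi u v : fld) (x y : torus).

Lemma q0_ge0 F : 0 <= q0 F.
Proof. by apply: le_trans (A0_coercive F); rewrite mulr_ge0 ?sqr_ge0 ?ltW. Qed.

Lemma q0_eq0 F : q0 F = 0 -> F = 0.
Proof.
move=> q0F; apply: Re_fdot_eq0; rewrite -fnorm_sqr.
have := A0_coercive F; rewrite q0F pmulr_rle0 // => le0.
by apply/eqP; rewrite eq_le le0 sqr_ge0.
Qed.

Lemma q0_scale (r : R) F : q0 (r%:C *: F) = r ^+ 2 * q0 F.
Proof. by rewrite linearZ fdotZl fdotZr conj_realC mulrA -rmorphM Re_realM expr2. Qed.

Lemma Re_fdot_small_le (t : R) X F G : fnorm X <= c0 / 2 * fnorm F ->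
  2 * t * Re (fdot X G) <= t ^+ 2 / 4 * q0 F + q0 G.
Proof.
move=> XF.
have XF2 : Re (fdot X X) <= c0 ^+ 2 / 4 * Re (fdot F F).
  by rewrite -!fnorm_sqr; have := ler_pM (fnorm_ge0 _) (fnorm_ge0 _) XF XF; lra.
(* Cauchy-Schwarz with weight [t / c0], then coercivity of [A0] on both sides. *)
have CS := Re_form_le (M := idfun) (fun _ _ => erefl) (fun F => Re_ge0 (fdot_ge0 F)) (t / c0) X G.
have FF := A0_coercive F; have GG := A0_coercive G; rewrite !fnorm_sqr in FF GG.
rewrite /= in CS; set k := t / c0 in CS.
have -> : t = k * c0 by rewrite /k divfK ?gt_eqF.
have := ler_wpM2l (ltW c0_gt0) CS.
have := ler_wpM2l (mulr_ge0 (sqr_ge0 k) (ltW c0_gt0)) XF2.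
have := ler_wpM2l (sqr_ge0 (k * c0 / 2)) FF.
lra.
Qed.

(* The weights 3, 6 and 2 below leave a factor 3/4 < 1 on [q0 G], which is what
   lets [Pi_energy_le] absorb the right-hand side into the left. *)
Lemma Re_cross_term_le F G :
  Re (fdot (A0 F) G) + Re (fdot (A1 F) G) - Re (fdot (A1 G) G)
    <= 9 / 4 * q0 F + 3 / 4 * q0 G.
Proof.
have := Re_form_le A0_herm q0_ge0 3 F G.
have := Re_fdot_small_le 6 G (A1_small F).
have := Re_fdot_small_le 2 G (X := - A1 G) (F := G); rewrite fnormN fdotNl ReN.
move=> /(_ (A1_small G)); lra.
Qed.

Lemma A_coercive F : q0 F / 2 <= Re (fdot (A0 F + A1 F) F).
Proof.
have := Re_fdot_small_le 2 F (X := - A1 F) (F := F); rewrite fnormN fdotNl ReN.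
by move=> /(_ (A1_small F)); rewrite fdotDl ReD; lra.
Qed.

Definition energy v : R := \sum_y q0 (grad v y).

Lemma Re_formA0 v : Re (formA A0 v v) = energy v.
Proof. exact: Re_sum. Qed.

Lemma energy_ge0 v : 0 <= energy v.
Proof. by apply: sumr_ge0 => y _; exact: q0_ge0. Qed.

Lemma formA_definite u : inX u -> formA A u u = 0 -> u = 0.
Proof.
move=> Xu Au0; apply: grad0_inX_eq0 => // y; apply: q0_eq0.
have half_ge0 z : 0 <= q0 (grad u z) / 2 by rewrite divr_ge0 // q0_ge0.
have sum_le0 : \sum_z q0 (grad u z) / 2 <= 0.
  apply: le_trans (_ : _ <= Re (formA A u u)) _; last by rewrite Au0.
  by rewrite /formA Re_sum; apply: ler_sum => z _; exact: A_coercive.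
have : \sum_z q0 (grad u z) / 2 == 0.
  by rewrite eq_le sum_le0 (sumr_ge0 _ (fun z _ => half_ge0 z)).
rewrite psumr_eq0 // => /allP/(_ y (mem_index_enum _)).
by rewrite mulf_eq0 invr_eq0 pnatr_eq0 orbF => /eqP.
Qed.

(* Finite-dimensional Lax-Milgram: pairing with a basis of H(Q + x) is injective
   on H(Q + x) by [formA_definite], hence onto. *)
Lemma Pi_exists x phi : exists v, isPi A l x phi v.
Proof.
have A_lin : linear A by move=> a F G; rewrite !linearP scalerDr addrACA.
case: (inH_vspace R m l x) => U UH; pose b := vbasis U.
pose g v := \row_(i < \dim U) formA A v b`_i.
have g_lin : linear g by move=> a u v; apply/matrixP => i j; rewrite !mxE formAP.
have gE v i : g v 0 i = formA A v b`_i by rewrite mxE.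
have g_inj u : u \in U -> g u = 0 -> u = 0.
  move=> Uu gu0; apply: formA_definite; first by case: (UH u).1.
  rewrite {2}(coord_vbasis Uu) formA_sumr big1 // => i _.
  by rewrite -gE gu0 mxE mulr0.
have [v Uv gv] := linear_onto_of_inj g_lin (erefl _) g_inj (g phi).
exists v; split => [|psi /UH Upsi]; first exact/UH.
rewrite (coord_vbasis Upsi) !formA_sumr; apply: eq_bigr => i _.
by rewrite -!gE gv.
Qed.

Lemma Pi_spec x phi : isPi A l x phi (Pi A l x phi).
Proof. exact: epsilon_spec (Pi_exists x phi). Qed.

Lemma Pi_energy_le x phi :
  energy (Pi A l x phi) <= 9 * \sum_(y | box l x y) q0 (grad phi y).
Proof.
have [Hv Pv] := Pi_spec x phi; set v := Pi A l x phi in Hv Pv *.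
have galerkin : energy v = \sum_y (Re (fdot (A0 (grad phi y)) (grad v y)) +
    Re (fdot (A1 (grad phi y)) (grad v y)) - Re (fdot (A1 (grad v y)) (grad v y))).
  have := congr1 (@complex.Re R) (Pv v Hv); rewrite /formA !Re_sum => Avv.
  transitivity (\sum_y (Re (fdot (A (grad v y)) (grad v y)) -
                        Re (fdot (A1 (grad v y)) (grad v y)))).
    by apply: eq_bigr => y _; rewrite fdotDl ReD addrK.
  by rewrite sumrB Avv -sumrB; apply: eq_bigr => y _; rewrite fdotDl ReD.
have : energy v <= \sum_y (9 / 4 * (if box l x y then q0 (grad phi y) else 0) +
                            3 / 4 * q0 (grad v y)).
  rewrite galerkin; apply: ler_sum => y _; case: ifP => [_|/negbT/(grad_inH_notbox Hv) ->].
    exact: Re_cross_term_le.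
  by rewrite linear0 !(@fdot0r R m d) !mulr0 !addr0 subr0.
by rewrite big_split /= -!mulr_sumr -big_mkcond -/(energy v); lra.
Qed.

Lemma energy_mean_le (v : torus -> fld) : (0 < l)%N -> (forall x, inH l x (v x)) ->
  energy ((l%:R : R[i]) ^- d *: \sum_x v x) <= (l ^ d)%:R^-1 * \sum_x energy (v x).
Proof.
move=> l_gt0 Hv; set K : R := (l ^ d)%:R.
have K_gt0 : 0 < K by rewrite ltr0n expn_gt0 l_gt0.
have -> : (l%:R : R[i]) ^- d = (K^-1)%:C by rewrite /K natrX fmorphV rmorphXn rmorph_nat.
have gradE y : grad ((K^-1)%:C *: \sum_x v x) y = (K^-1)%:C *: \sum_(x | box l x y) grad (v x) y.
  rewrite gradZ grad_sum (bigID (box l ^~ y)) /= [X in _ + X]big1 ?addr0 // => x.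
  exact: grad_inH_notbox.
apply: (@le_trans _ _ (\sum_y K^-1 ^+ 2 * (K * \sum_x q0 (grad (v x) y)))).
  apply: ler_sum => y _; rewrite gradE q0_scale ler_wpM2l ?sqr_ge0 //.
  apply: le_trans (form_sum_le A0_herm q0_ge0 _ _) _.
  have sum_ge0 (B : pred torus) : 0 <= \sum_(x | B x) q0 (grad (v x) y).
    by apply: sumr_ge0 => x _; exact: q0_ge0.
  apply: ler_pM; rewrite ?ler0n ?ler_nat ?card_box ?sum_ge0 //.
  by rewrite [X in _ <= X](bigID (box l ^~ y)) /= lerDl sum_ge0.
rewrite -!mulr_sumr exchange_big /= mulrA expr2 -(mulrA K^-1) mulVf ?mulr1 ?gt_eqF //.
Qed.

Lemma sum_Pi_energy_le phi : (0 < l)%N ->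
  \sum_x energy (Pi A l x phi) <= 9 * (l ^ d)%:R * energy phi.
Proof.
move=> l_gt0; apply: le_trans (ler_sum _ (fun x _ => Pi_energy_le x phi)) _.
rewrite -mulr_sumr -mulrA ler_wpM2l // /energy mulr_sumr.
under eq_bigr do rewrite big_mkcond.
rewrite exchange_big; apply: ler_sum => y _.
rewrite -big_mkcond sumr_const mulr_natl.
apply: ler_wpMn2l; [exact: q0_ge0 | exact: card_box].
Qed.

Lemma energy_TA_le phi : (0 < l)%N -> energy (TA A l phi) <= 9 * energy phi.
Proof.
move=> l_gt0; have K_gt0 : 0 < (l ^ d)%:R :> R by rewrite ltr0n expn_gt0 l_gt0.
apply: le_trans (energy_mean_le l_gt0 (fun x => (Pi_spec x phi).1)) _.
rewrite -ler_pdivlMl ?invr_gt0 // invrK mulrCA mulrA.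
exact: sum_Pi_energy_le.
Qed.

Lemma normA_TA_le phi : (0 < l)%N -> normA A0 (TA A l phi) <= 3 * normA A0 phi.
Proof.
move=> l_gt0; rewrite /normA !Re_formA0.
have -> : 3 = Num.sqrt (3 ^+ 2) :> R by rewrite sqrtr_sqr ger0_norm.
rewrite -sqrtrM ?sqr_ge0 // ler_sqrt ?mulr_ge0 ?sqr_ge0 ?energy_ge0 //.
by have := energy_TA_le phi l_gt0; lra.
Qed.

End Operator.

Unset Implicit Arguments.

Theorem lemma5p4 (R : rcfType) (d m L N l : nat)
  (hd : (2 <= d)%N) (hm : (1 <= m)%N) (hL : (3 <= L)%N) (hLodd : odd L)
  (hN : (1 <= N)%N) (hl : (3 <= l)%N) (hlL : (l.-1 < L ^ N)%N)
  (A0 A1 : {linear 'M[R[i]]_(m, d) -> 'M[R[i]]_(m, d)}) (c0 : R) (hc0 : 0 < c0)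
  (hA0herm : forall F G : 'M[R[i]]_(m, d), fdot (A0 F) G = fdot F (A0 G))
  (hA0coer : forall F : 'M[R[i]]_(m, d), c0 * fnorm F ^+ 2 <= complex.Re (fdot (A0 F) F))
  (hA1 : forall F : 'M[R[i]]_(m, d), fnorm (A1 F) <= c0 / 2 * fnorm F)
  (phi : field R d m (L ^ N)) (hphi : inX phi) :
  normA A0 (TA (fun F => A0 F + A1 F) l phi) <= 9 * normA A0 phi.
Proof.
have l_gt0 : (0 < l)%N by apply: leq_trans hl.
apply: le_trans (normA_TA_le hc0 hA0herm hA0coer hA1 phi l_gt0) _.
by rewrite ler_wpM2r ?sqrtr_ge0 // ler_nat.
Qed.
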